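(* Let $Y\subset\mathbb{P}^m_\mathbb{Q}$ be a smooth geometrically integral projective variety with $Y(\mathbb{A}_\mathbb{Q})\neq\emptyset$ and let $\mathcal{Y}\subset\mathbb{P}^m_\mathbb{Z}$ be a $\mathbb{Z}$-integral model. Let $\mathcal{E}_f\subset Y(\mathbb{A}^f_\mathbb{Q})$ be non-empty and open-closed with $\mathcal{E}_f\ne Y(\mathbb{A}^f_\mathbb{Q})$, and let $\mathcal{E}_f^c=Y(\mathbb{A}^f_\mathbb{Q})\setminus\mathcal{E}_f$. Then $\mathcal{L}(\mathcal{E}_f^c)=\mathcal{L}(\mathcal{E}_f)$.
   Context: $Y(\mathbb{A}^f_\mathbb{Q})=\prod_pY(\mathbb{Q}_p)=\prod_p\mathcal{Y}(\mathbb{Z}_p)$. For $l\ge1$ and $\xi=(\xi_p)_{p\mid l}$ with $\xi_p=[\xi_{p,0}:\dots:\xi_{p,m}]\in Y(\mathbb{Q}_p)$, $\xi_{p,i}\in\mathbb{Z}_p$ not all in $p\mathbb{Z}_p$, set $\mathcal{E}_p(l;\xi_p)=Y(\mathbb{Q}_p)\cap\{[\zeta_0:\dots:\zeta_m]:\zeta_i\in\xi_{p,i}+p^{\mathrm{ord}_p(l)}\mathbb{Z}_p\ \forall i\}$; the projective congruence neighbourhood of level $l$ associated to $\xi$ is $\mathcal{E}_f(l;\xi)=\prod_{p\mid l}\mathcal{E}_p(l;\xi_p)\times\prod_{p\nmid l}\mathcal{Y}(\mathbb{Z}_p)$ (when non-empty). For non-empty open-closed $\mathcal{E}\subset Y(\mathbb{A}^f_\mathbb{Q})$,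 the covering exponent $\mathcal{L}(\mathcal{E})$ is the smallest integer $l$ such that $\mathcal{E}$ is a finite disjoint union of projective congruence neighbourhoods all of level $l$. *)

From mathcomp Require Import all_boot all_order all_algebra all_field.
From mathcomp Require Import mpoly.
From mathcomp Require Import Rstruct.

Set Implicit Arguments.
Unset Strict Implicit.
Unset Printing Implicit Defensive.

Import GRing.Theory Num.Theory.
Local Open Scope ring_scope.

(* The projective variety Y ⊂ P^m_Q is given by a finite list F of           *)
(* homogeneous polynomials with integer coefficients in x_0..x_m,            *)
(* Y = Proj Q[x_0..x_m]/(F).                                                 *)

Definition homog_sys (m : nat) (F : seq {mpoly int[m.+1]}) : Prop :=
  forall f, f \in F -> exists d : nat, f \is d.-homog.

(* base change to Qbar = algC *)
Definition toC (m : nat) (f : {mpoly int[m.+1]}) : {mpoly algC[m.+1]} :=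
  map_mpoly (fun z : int => z%:~R) f.

Definition idealC (m : nat) (F : seq {mpoly int[m.+1]}) (g : {mpoly algC[m.+1]}) : Prop :=
  exists h : 'I_(size F) -> {mpoly algC[m.+1]},
    g = \sum_(i < size F) h i * toC (nth 0 F i).

(* its saturation with respect to the irrelevant ideal (x_0,...,x_m):
   the homogeneous ideal of Y_Qbar *)
Definition satC (m : nat) (F : seq {mpoly int[m.+1]}) (g : {mpoly algC[m.+1]}) : Prop :=
  forall i : 'I_(m.+1), exists N : nat, idealC F ('X_i ^+ N * g).

(* Y is geometrically integral (in particular non-empty): the homogeneous
   ideal of Y_Qbar is a prime ideal of Qbar[x]. *)
Definition geom_integral (m : nat) (F : seq {mpoly int[m.+1]}) : Prop :=
  ~ satC F 1 /\ forall g h, satC F (g * h) -> satC F g \/ satC F h.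

Definition prime_idealC (m : nat) (Q : {mpoly algC[m.+1]} -> Prop) : Prop :=
  [/\ Q 0, (forall a b, Q a -> Q b -> Q (a + b)),
      (forall a b, Q b -> Q (a * b)), ~ Q 1 &
      (forall a b, Q (a * b) -> Q a \/ Q b)].

Definition prime_chain (m : nat) (F : seq {mpoly int[m.+1]}) (n : nat) : Prop :=
  exists Q : nat -> {mpoly algC[m.+1]} -> Prop,
    [/\ (forall g, Q 0%N g <-> satC F g),
        (forall i, (i <= n)%N -> prime_idealC (Q i)) &
        (forall i, (i < n)%N ->
           (forall g, Q i g -> Q i.+1 g) /\ exists g, Q i.+1 g /\ ~ Q i g)].

(* Krull dimension D of the homogeneous coordinate ring Qbar[x]/I(Y)
   (the affine cone over Y; dim Y = D - 1) *)
Definition cone_dim (m : nat) (F : seq {mpoly int[m.+1]}) (D : nat) : Prop :=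
  prime_chain F D /\ ~ prime_chain F D.+1.

Definition jac_rank_ge (m : nat) (F : seq {mpoly int[m.+1]})
    (a : 'I_(m.+1) -> algC) (r : nat) : Prop :=
  exists G : 'I_r -> {mpoly algC[m.+1]},
    (forall i, satC F (G i)) /\
    \rank (\matrix_(i < r, j < m.+1) (mderiv j (G i)).@[a]) = r.

(* Y is smooth (Jacobian criterion on the affine cone, away from 0):
   at every Qbar-point the Jacobian of I(Y) has rank equal to the codimension
   (m+1) - D of the cone. *)
Definition smooth (m : nat) (F : seq {mpoly int[m.+1]}) : Prop :=
  exists D : nat, cone_dim F D /\
    forall a : 'I_(m.+1) -> algC, (exists i, a i != 0) ->
      (forall g, satC F g -> g.@[a] = 0) ->
      jac_rank_ge F a (m.+1 - D) /\ ~ jac_rank_ge F a (m.+2 - D).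

Definition real_point (m : nat) (F : seq {mpoly int[m.+1]}) : Prop :=
  exists a : 'I_(m.+1) -> Rdefinitions.R, (exists i, a i <> 0) /\
    forall f, f \in F -> (map_mpoly (fun z : int => z%:~R) f).@[a] = 0.

(* p-adic integers: a p-adic integer is the compatible sequence of its       *)
(* residues a k = (a mod p^k) in [0, p^k).                                   *)
Definition is_zp (p : nat) (a : nat -> nat) : Prop :=
  forall k, (a k < p ^ k)%N /\ (a k.+1 %% p ^ k)%N = a k.

(* a vector of m+1 p-adic integers *)
Definition Vec (m : nat) := 'I_(m.+1) -> nat -> nat.

(* f(v) = 0 in Z_p, i.e. f(v) = 0 mod p^k for every k *)
Definition vanish (m : nat) (p : nat) (f : {mpoly int[m.+1]}) (v : Vec m) : Prop :=
  forall k, ((p ^ k)%:Z %| f.@[fun i => (v i k)%:Z])%Z.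

(* normalized representative of a point of P^m(Q_p): primitive vector whose
   first unit coordinate equals 1 (every point has exactly one) *)
Definition normalized (m : nat) (p : nat) (v : Vec m) : Prop :=
  exists i0 : 'I_(m.+1),
    (forall j : 'I_(m.+1), (j < i0)%N -> v j 1%N = 0%N) /\
    forall k, v i0 k = (1 %% p ^ k)%N.

(* v is (the normalized representative of) a point of Y(Q_p) = 𝒴(Z_p) *)
Definition Ypt (m : nat) (F : seq {mpoly int[m.+1]}) (p : nat) (v : Vec m) : Prop :=
  [/\ (forall i, is_zp p (v i)), normalized p v &
      forall f, f \in F -> vanish p f v].

Definition adelic_nonempty (m : nat) (F : seq {mpoly int[m.+1]}) : Prop :=
  real_point F /\ forall p, prime p -> exists v, Ypt F p v.

(* points of Y(A^f_Q) = prod_p Y(Q_p); the component at a non-prime index is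
   a dummy fixed to 0 *)
Definition Af (m : nat) (F : seq {mpoly int[m.+1]}) (x : nat -> Vec m) : Prop :=
  forall p, (prime p -> Ypt F p (x p)) /\ (~~ prime p -> x p = fun _ _ => 0%N).

(* projective congruence neighbourhood E_f(l; xi) (l >= 1): for p | l the
   point x_p has a representative zeta = u * x_p (u a p-adic unit) with
   zeta_i = xi_{p,i} mod p^(ord_p l) for all i *)
Definition Nbhd (m : nat) (F : seq {mpoly int[m.+1]}) (l : nat)
    (xi : nat -> Vec m) (x : nat -> Vec m) : Prop :=
  Af F x /\
  forall p, prime p -> (p %| l)%N ->
    exists u, [/\ is_zp p u, u 1%N != 0%N &
      forall i, ((u (logn p l) * x p i (logn p l)) %% p ^ (logn p l))%N
                = xi p i (logn p l)].

Definition center (m : nat) (F : seq {mpoly int[m.+1]}) (l : nat) (xi : nat -> Vec m) : Prop :=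
  forall p, prime p -> (p %| l)%N -> Ypt F p (xi p).

Definition covered_at (m : nat) (F : seq {mpoly int[m.+1]})
    (E : (nat -> Vec m) -> Prop) (l : nat) : Prop :=
  (0 < l)%N /\
  exists (n : nat) (xis : 'I_n -> nat -> Vec m),
    [/\ (forall j, center F l (xis j)),
        (forall j j', j != j' -> forall x, ~ (Nbhd F l (xis j) x /\ Nbhd F l (xis j') x)) &
        (forall x, E x <-> exists j, Nbhd F l (xis j) x)].

(* "L(E) = l": l is the covering exponent of E *)
Definition cov_exp (m : nat) (F : seq {mpoly int[m.+1]})
    (E : (nat -> Vec m) -> Prop) (l : nat) : Prop :=
  covered_at F E l /\ forall l', covered_at F E l' -> (l <= l')%N.

(* topology of Y(A^f_Q) (restricted = full product of the compact Y(Q_p)):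
   the congruence neighbourhoods E_f(l; x), l >= 1, form a neighbourhood base at x *)
Definition open_in (m : nat) (F : seq {mpoly int[m.+1]}) (U : (nat -> Vec m) -> Prop) : Prop :=
  forall x, U x -> exists l, (0 < l)%N /\ forall y, Nbhd F l x y -> U y.

Definition complementA (m : nat) (F : seq {mpoly int[m.+1]}) (E : (nat -> Vec m) -> Prop) :=
  fun x => Af F x /\ ~ E x.

Definition clopen (m : nat) (F : seq {mpoly int[m.+1]}) (E : (nat -> Vec m) -> Prop) : Prop :=
  [/\ (forall x, E x -> Af F x), open_in F E & open_in F (complementA F E)].

From mathcomp Require Import all_boot all_order all_algebra all_field.
From mathcomp Require Import mpoly.
From mathcomp Require Import Rstruct.
From mathcomp Require Import boolp.

(** A normalized representative has 1 as its first coordinate prime to p,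
  and the position of that coordinate is read off mod p.  Hence if
  u v = w mod p^k for normalized v, w and a p-adic unit u, then u = 1 mod
  p^k, hence v = w mod p^k.  So the level-l neighbourhoods are the classes of "the
  normalized representatives agree mod p^(ord_p l) for every p | l", an
  equivalence relation with finitely many classes, and a set is a finite
  disjoint union of them iff it is a union of classes.  That property passes
  to the complement, so E and its complement are covered at exactly the same
  levels.  Only E ⊆ Y(A^f_Q) is used. *)

Set Implicit Arguments.
Unset Strict Implicit.
Unset Printing Implicit Defensive.

Lemma is_zp_modn p a j k : is_zp p a -> (j <= k)%N -> a k %% p ^ j = a j.
Proof.
move=> za; elim: k => [|k IH] le_jk.
  by move: le_jk; rewrite leqn0 => /eqP ->; rewrite modn_small //; case: (za 0%N).
move: le_jk; rewrite leq_eqVlt ltnS => /orP[/eqP ->|le_jk].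
  by rewrite modn_small //; case: (za k.+1).
by rewrite -(modn_dvdm _ (dvdn_exp2l p le_jk)) (za k).2 IH.
Qed.

Definition unit_congr m p k (v w : Vec m) : Prop :=
  exists u, [/\ is_zp p u, u 1%N != 0%N & forall i, (u k * v i k) %% p ^ k = w i k].

Section NormalizedRepresentatives.

Variables (m p : nat) (v w : Vec m).
Hypotheses (p_gt1 : (1 < p)%N) (zp_v : forall i, is_zp p (v i))
  (zp_w : forall i, is_zp p (w i)).

Lemma normalized_pivot_eq c (i0 i1 : 'I_m.+1) :
  (0 < c < p)%N -> (forall i, w i 1%N = c * v i 1%N %% p) ->
  (forall j : 'I_m.+1, (j < i0)%N -> v j 1%N = 0%N) -> v i0 1%N = 1%N ->
  (forall j : 'I_m.+1, (j < i1)%N -> w j 1%N = 0%N) -> w i1 1%N = 1%N ->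
  i0 = i1.
Proof.
move=> /andP[c_gt0 c_ltp] w_modp v0 v1 w0 w1.
case: (ltngtP i0 i1) => [lt01|lt10|/val_inj //].
  by move: (w0 _ lt01); rewrite w_modp v1 muln1 modn_small // => c0; rewrite c0 in c_gt0.
by move: w1; rewrite w_modp v0 // muln0 mod0n.
Qed.

Lemma unit_congrP k : (0 < k)%N -> normalized p v -> normalized p w ->
  unit_congr p k v w <-> forall i, v i k = w i k.
Proof.
move=> k_gt0 [i0 [v0 v1]] [i1 [w0 w1]].
have one_modp : 1 %% p ^ 1 = 1%N by rewrite expn1 modn_small.
split=> [[u [zp_u u1_neq0 uvw]]|vw].
  have w_modp i : w i 1%N = u 1%N * v i 1%N %% p.
    rewrite -(is_zp_modn (zp_w i) k_gt0) -uvw (modn_dvdm _ (dvdn_exp2l p k_gt0)).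
    by rewrite -modnMm (is_zp_modn zp_u k_gt0) (is_zp_modn (zp_v i) k_gt0) expn1.
  have u1_ltp : (u 1%N < p)%N by rewrite -[p]expn1; case: (zp_u 1%N).
  have ei : i0 = i1.
    apply: (normalized_pivot_eq _ w_modp v0 _ w0); rewrite ?v1 ?w1 //.
    by rewrite lt0n u1_neq0.
  subst i1.
  have uk_mod : u k %% p ^ k = 1 %% p ^ k by rewrite -w1 -uvw v1 modnMmr muln1.
  move=> i; rewrite -uvw -modnMml uk_mod modnMml mul1n modn_small //.
  by case: (zp_v i k).
exists (fun k => 1 %% p ^ k); split.
- move=> j; rewrite ltn_mod expn_gt0 (ltn_trans _ p_gt1) //.
  by split=> //; apply: modn_dvdm; apply: dvdn_exp2l.
- by rewrite one_modp.
- move=> i; rewrite modnMml mul1n modn_small vw //; by case: (zp_w i k).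
Qed.

End NormalizedRepresentatives.

Section CongruenceNeighbourhoods.

Variables (m : nat) (F : seq {mpoly int[m.+1]}).

Definition same_residues (l : nat) (x y : nat -> Vec m) : Prop :=
  forall p, prime p -> (p %| l)%N -> forall i, x p i (logn p l) = y p i (logn p l).

Lemma Af_center l x : Af F x -> center F l x.
Proof. by move=> Ax p p_pr _; case: (Ax p) => /(_ p_pr). Qed.

Lemma NbhdP l xi x : (0 < l)%N -> center F l xi ->
  Nbhd F l xi x <-> Af F x /\ same_residues l x xi.
Proof.
move=> l_gt0 xi_center.
have congrP p : prime p -> (p %| l)%N -> Af F x ->
    unit_congr p (logn p l) (x p) (xi p) <->
    forall i, x p i (logn p l) = xi p i (logn p l).
  move=> p_pr p_dvd Ax.
  have [zp_x x_norm _] := (Ax p).1 p_pr.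
  have [zp_xi xi_norm _] := xi_center p p_pr p_dvd.
  apply: unit_congrP; rewrite ?prime_gt1 // logn_gt0 mem_primes p_pr l_gt0.
  exact: p_dvd.
by split=> -[Ax agree]; split=> // p p_pr p_dvd; apply/congrP => //; apply: agree.
Qed.

(* The residues compared by [same_residues], packed into a finite type: this
  is what bounds the number of level-l neighbourhoods. *)
Definition residues (l : nat) (x : nat -> Vec m) :
    {ffun 'I_l.+1 * 'I_m.+1 -> 'I_l.+1} :=
  [ffun q : 'I_l.+1 * 'I_m.+1 =>
     inord (if prime q.1 && (q.1 %| l)%N then x q.1 q.2 (logn q.1 l) else 0%N)].

Lemma residue_lt l x p i : (0 < l)%N -> Af F x -> prime p -> (p %| l)%N ->
  (x p i (logn p l) < l.+1)%N.
Proof.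
move=> l_gt0 Ax p_pr _; have [zp_x _ _] := (Ax p).1 p_pr.
rewrite ltnS (leq_trans (ltnW (zp_x i _).1)) //.
exact: dvdn_leq l_gt0 (pfactor_dvdnn p l).
Qed.

Lemma residues_eqP l x y : (0 < l)%N -> Af F x -> Af F y ->
  residues l x = residues l y <-> same_residues l x y.
Proof.
move=> l_gt0 Ax Ay; split=> [exy p p_pr p_dvd i|sxy].
  have p_lt : (p < l.+1)%N by rewrite ltnS dvdn_leq.
  move/ffunP/(_ (Ordinal p_lt, i))/(congr1 val): exy.
  by rewrite !ffunE /= p_pr p_dvd /= !inordK ?residue_lt.
apply/ffunP => -[q i]; rewrite !ffunE /=.
by case: ifP => // /andP[p_pr p_dvd]; rewrite sxy.
Qed.

Definition residue_saturated (l : nat) (E : (nat -> Vec m) -> Prop) : Prop :=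
  forall x y, E x -> Af F y -> same_residues l x y -> E y.

Lemma covered_at_saturated l E : covered_at F E l -> residue_saturated l E.
Proof.
move=> [l_gt0 [n [xis [xis_center _ E_cover]]]] x y Ex Ay sxy.
have [j /(NbhdP _ l_gt0 (xis_center j)) [_ sx]] := (E_cover x).1 Ex.
apply/E_cover; exists j; apply/(NbhdP _ l_gt0 (xis_center j)).
by split=> // p p_pr p_dvd i; rewrite -sxy ?sx.
Qed.

Lemma complementA_saturated l E :
  residue_saturated l E -> residue_saturated l (complementA F E).
Proof.
move=> E_sat x y [Ax nEx] Ay sxy; split=> // Ey; apply: nEx.
by apply: (E_sat y) => // p p_pr p_dvd i; rewrite sxy.
Qed.

Lemma saturated_covered_at l E : (0 < l)%N -> (forall x, E x -> Af F x) ->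
  residue_saturated l E -> covered_at F E l.
Proof.
move=> l_gt0 E_Af E_sat; split=> //.
pose S := [set d | `[< exists x, E x /\ residues l x = d >]].
have reps_exist (j : 'I_#|S|) : exists x, E x /\ residues l x = enum_val j.
  by have := enum_valP j; rewrite inE => /asboolP.
have [xis xisP] := fin_all_exists reps_exist.
have xis_center j : center F l (xis j) := Af_center (E_Af _ (xisP j).1).
exists #|S|, xis; split=> // [j j' neq_jj' x []|x].
  rewrite !NbhdP // => -[Ax sx] [_ sx']; apply/negP: neq_jj'; apply/negPn/eqP.
  apply: enum_val_inj; case: (xisP j) (xisP j') => [Ej <-] [Ej' <-].
  apply/(residues_eqP l_gt0 (E_Af _ Ej) (E_Af _ Ej')) => p p_pr p_dvd i.
  by rewrite -sx ?sx'.
split=> [Ex|[j]]; last first.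
  rewrite NbhdP // => -[Ax sx]; case: (xisP j) => Ej _.
  by apply: (E_sat (xis j)) => // p p_pr p_dvd i; rewrite sx.
have dS : residues l x \in S by rewrite inE; apply/asboolP; exists x.
pose j := enum_rank_in dS (residues l x).
have exj : residues l (xis j) = residues l x by rewrite (xisP j).2 enum_rankK_in.
exists j; rewrite NbhdP //; split; first exact: E_Af.
by apply/(residues_eqP l_gt0 (E_Af _ Ex) (E_Af _ (xisP j).1)); rewrite exj.
Qed.

Lemma covered_at_ext l (E1 E2 : (nat -> Vec m) -> Prop) :
  (forall x, E1 x <-> E2 x) -> covered_at F E1 l -> covered_at F E2 l.
Proof.
move=> eE [l_gt0 [n [xis [xis_center disj cover]]]]; split=> //.
by exists n, xis; split=> // x; rewrite -eE.
Qed.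

Lemma complementAK E : (forall x, E x -> Af F x) ->
  forall x, complementA F (complementA F E) x <-> E x.
Proof.
move=> E_Af x; split=> [[Ax nCx]|Ex]; last by split=> [|[]]; [apply: E_Af|].
by apply: contrapT => nEx; apply: nCx.
Qed.

Lemma covered_at_complementA l E :
  covered_at F E l -> covered_at F (complementA F E) l.
Proof.
move=> E_cov; apply: saturated_covered_at; first by case: E_cov.
  by move=> x [].
exact/complementA_saturated/(covered_at_saturated E_cov).
Qed.

Lemma covered_at_complementA_iff l E : (forall x, E x -> Af F x) ->
  covered_at F (complementA F E) l <-> covered_at F E l.
Proof.
move=> E_Af; split; last exact: covered_at_complementA.
by move/covered_at_complementA; apply/covered_at_ext/complementAK.
Qed.

Lemma cov_exp_ext l (E1 E2 : (nat -> Vec m) -> Prop) :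
  (forall l', covered_at F E1 l' <-> covered_at F E2 l') ->
  cov_exp F E1 l <-> cov_exp F E2 l.
Proof.
move=> eE; split=> -[cov_l min_l]; split=> [|l' /eE]; by [apply/eE | apply: min_l].
Qed.

End CongruenceNeighbourhoods.

Theorem lemma2p10 (m : nat) (F : seq {mpoly int[m.+1]}) (E : (nat -> Vec m) -> Prop) :
  homog_sys F -> geom_integral F -> smooth F -> adelic_nonempty F ->
  clopen F E -> (exists x, E x) -> (exists x, complementA F E x) ->
  forall l : nat, cov_exp F (complementA F E) l <-> cov_exp F E l.
Proof.
move=> _ _ _ _ [E_Af _ _] _ _ l.
by apply: cov_exp_ext => l'; apply: covered_at_complementA_iff.
Qed.
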